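(* Let $q,q',n$ be integers with $q'\ge 2q+1$, $q>1$ and $n>1$. Let $S$ be an $\mathcal{OS}_q(n)$ of period $m$ with ring sequence $[s_0,\ldots,s_{m-1}]$ where $s_0=0$. For $x\in\mathbb{Z}_q$ let $x'$ denote the class in $\mathbb{Z}_{q'}$ of the integer in $\{0,\ldots,q-1\}$ representing $x$. Define $t_i=(-1)^{i+m-1}s_i'$ if $s_i'\neq0$ and $t_i=(-1)^{i+m-1}q$ if $s_i'=0$ ($0\le i\le m-1$). Let $U$ be the periodic sequence over $\mathbb{Z}_{q'}$ with ring sequence \[[s_0',\ldots,s_{m-1}',\,-s_0',\ldots,-s_{m-1}',\,t_0,\ldots,t_{m-1},\,-t_0,\ldots,-t_{m-1}].\] Then $U$ is an $\mathcal{SOS}_{q'}(n)$ of period $4m$ with $w_{q'}(U)=0$.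
   Context: For a periodic sequence $S=(s_i)$ write $\mathbf{s}_n(i)=(s_i,\ldots,s_{i+n-1})$; $\mathbf{u}^R$ is the reverse of a tuple and $-\mathbf{u}$ its termwise negative. An $n$-window sequence of period $m$ satisfies $\mathbf{s}_n(i)=\mathbf{s}_n(j)\Rightarrow i\equiv j\pmod m$. An $\mathcal{OS}_q(n)$ is a $q$-ary $n$-window sequence with $\mathbf{s}_n(i)\neq\mathbf{s}_n(j)^R$ for all $i,j$; an $\mathcal{SOS}_q(n)$ is an $\mathcal{OS}_q(n)$ with also $\mathbf{s}_n(i)\neq-\mathbf{s}_n(j)^R$ for all $i,j$. The ring sequence of a sequence of period $m$ is one period. The weight $w(U)$ is the integer sum of one period with terms taken in $\{0,\ldots,q'-1\}$; $w_{q'}(U)=w(U)\bmod q'$. *)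

From mathcomp Require Import all_boot all_order all_algebra.
Set Implicit Arguments. Unset Strict Implicit. Unset Printing Implicit Defensive.
Import GRing.Theory.
Local Open Scope ring_scope.

(* A periodic sequence is represented by its ring sequence r (one period);
   its period is m = size r and its i-th term is r_(i mod m). *)
Definition term {T : zmodType} (r : seq T) (i : nat) : T := nth 0 r (i %% size r).

Definition window {T : zmodType} (r : seq T) (n i : nat) : seq T :=
  mkseq (fun k => term r (i + k)) n.

Definition is_window_seq {T : zmodType} (r : seq T) (n : nat) : Prop :=
  forall i j : nat, window r n i = window r n j -> i = j %[mod size r].

Definition is_OS {T : zmodType} (r : seq T) (n : nat) : Prop :=
  is_window_seq r n /\
  forall i j : nat, window r n i <> rev (window r n j).

Definition is_SOS {T : zmodType} (r : seq T) (n : nat) : Prop :=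
  is_OS r n /\
  forall i j : nat, window r n i <> map -%R (rev (window r n j)).

Definition weight (q' : nat) (r : seq 'Z_q') : nat := \sum_(x <- r) (x : nat).

(* Folding v |-> min(v, q' - v) maps Z_q' onto Z_q, forgets signs, and sends
   every term of U back to the corresponding term of S, because all magnitudes
   occurring in U are at most q < q'/2.  Hence a coincidence between windows of U,
   or between a window and a (negated) reversed window, folds to one in S: the last
   two are excluded by the OS property, and the first forces the positions to agree
   modulo m, i.e. to differ by 0, m, 2m or 3m modulo 4m.  A shift by 2m compares
   s'_j with t_j, which agree only if s_j <> 0 and (-1)^(j+m-1) = 1; as this sign
   alternates in j, equals 1 at j = m-1, and s_0 = 0, that never happens at two
   consecutive positions.  A shift by m (3m is its inverse) either stays in the
   block s', where it forces s_j = 0, or needs the sign -1 at two consecutive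
   positions; so it forces a zero window of S, which is its own reverse.  The
   weight vanishes because U consists of two sequences and their negatives. *)

From mathcomp Require Import all_boot all_order all_algebra.
From mathcomp Require Import zify.
Import GRing.Theory.
Local Open Scope ring_scope.

Lemma term_addMn (T : zmodType) (u : seq T) x k :
  term u (x + k * size u) = term u x.
Proof. by rewrite /term addnC modnMDl. Qed.

Lemma window_addMn (T : zmodType) (u : seq T) n x k :
  window u n (x + k * size u) = window u n x.
Proof. by apply: eq_mkseq => i; rewrite addnAC term_addMn. Qed.

Lemma term_window_eq {T : zmodType} {u : seq T} {n x y k : nat} : (k < n)%N ->
  window u n x = window u n y -> term u (x + k) = term u (y + k).
Proof. by move=> ltkn /(congr1 (fun w => nth 0 w k)); rewrite !nth_mkseq. Qed.

Lemma nth_flatten_eqsize (T : Type) (x0 : T) (ss : seq (seq T)) m b j :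
  all (fun u => size u == m) ss -> (j < m)%N ->
  nth x0 (flatten ss) (b * m + j) = nth x0 (nth [::] ss b) j.
Proof.
move=> + ltjm; elim: ss b => [|u ss IHss] b; first by rewrite !nth_nil.
case/andP => /eqP szu szss; case: b => [|b] /=; first by rewrite nth_cat szu ltjm.
by rewrite nth_cat szu mulSn -addnA ltnNge leq_addr /= addKn IHss.
Qed.

Lemma modnM_divmod x d m : (x %% (d * m) = x %/ m %% d * m + x %% m)%N.
Proof.
rewrite modn_divl -[in RHS](modn_dvdm x (dvdn_mull d (dvdnn m))).
exact: divn_eq.
Qed.

Lemma ltn_valZp {r} (v : 'Z_r) : (1 < r)%N -> (v < r)%N.
Proof. by case: r v => [|[|r]]. Qed.

Lemma val_oppZp {r} (v : 'Z_r) : (1 < r)%N -> (- v : 'Z_r) = ((r - v) %% r)%N :> nat.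
Proof. by case: r v => [|[|r]]. Qed.

Lemma val_natZp r u : (u < r)%N -> (u%:R : 'Z_r) = u :> nat.
Proof.
move=> ltur; have [r_gt1 | ] := ltnP 1 r; first by rewrite /= val_Zp_nat // modn_small.
by move=> ler1; have -> : u = 0%N by lia.
Qed.

Lemma natZp_inj {r u v : nat} : (u < r)%N -> (v < r)%N -> u%:R = v%:R :> 'Z_r -> u = v.
Proof. by move=> ltur ltvr /(congr1 (@nat_of_ord _)); rewrite !val_natZp. Qed.

Lemma natZp_eq0 r u : (u < r)%N -> (u%:R == 0 :> 'Z_r) = (u == 0%N).
Proof. by move=> ltur; rewrite -val_eqE /= val_natZp. Qed.

Lemma signed_natZp_inj r (u v k l : nat) : (u + v < r)%N ->
  (-1) ^+ k * u%:R = (-1) ^+ l * v%:R :> 'Z_r ->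
  u = v /\ (u = 0 \/ odd k = odd l)%N.
Proof.
move=> ltuvr; have [ltur ltvr] : (u < r)%N /\ (v < r)%N by lia.
have opp_eq : u%:R = - v%:R :> 'Z_r -> u = v /\ u = 0%N.
  move/eqP; rewrite -subr_eq0 opprK -natrD => /eqP.
  by move/(natZp_inj ltuvr (leq_ltn_trans (leq0n _) ltuvr)); lia.
rewrite -(signr_odd _ k) -(signr_odd _ l).
case: (odd k); case: (odd l); rewrite ?expr0 ?expr1 ?mul1r ?mulN1r.
- by move/oppr_inj/(natZp_inj ltur ltvr) ->; split=> //; right.
- by move/eqP; rewrite eqr_oppLR => /eqP/opp_eq[-> ->]; split=> //; left.
- by move/opp_eq => [-> ->]; split=> //; left.
- by move/(natZp_inj ltur ltvr) ->; split=> //; right.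
Qed.

Definition fold_Zp (q : nat) {r : nat} (v : 'Z_r) : 'Z_q := (minn v (r - v))%:R.

Lemma fold_ZpN q r (v : 'Z_r) : (1 < r)%N -> fold_Zp q (- v) = fold_Zp q v.
Proof.
move=> r_gt1; rewrite /fold_Zp val_oppZp //; have := ltn_valZp v r_gt1.
case: (posnP v) => [-> | v_gt0] ltvr; first by rewrite subn0 modnn !min0n.
by rewrite modn_small; [congr _%:R; lia | lia].
Qed.

Lemma map_fold_ZpN q r (w : seq 'Z_r) : (1 < r)%N ->
  map (fold_Zp q) (map -%R w) = map (fold_Zp q) w.
Proof. by move=> r_gt1; rewrite -map_comp; apply: eq_map => v /=; rewrite fold_ZpN. Qed.

Lemma fold_Zp_signed q r (v k : nat) : (2 * v < r)%N ->
  fold_Zp q ((-1) ^+ k * v%:R : 'Z_r) = v%:R.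
Proof.
move=> lt2vr; case: (posnP v) => [-> | v_gt0]; first by rewrite mulr0 /fold_Zp min0n.
have r_gt1 : (1 < r)%N by lia.
have fold_v : fold_Zp q (v%:R : 'Z_r) = v%:R.
  by rewrite /fold_Zp val_natZp; [congr _%:R; lia | lia].
by rewrite -signr_odd; case: odd; rewrite ?mul1r ?mulN1r ?fold_ZpN.
Qed.

Section FoldedConstruction.

Variables (q r : nat) (s : seq 'Z_q).
Hypotheses (lt2qr : (2 * q < r)%N) (q_gt1 : (1 < q)%N) (s_gt0 : (0 < size s)%N).

Local Notation m := (size s).

Definition s_lift : seq 'Z_r := [seq (nat_of_ord x)%:R | x <- s].

Definition t_seq : seq 'Z_r :=
  mkseq (fun i => (-1) ^+ (i + m - 1) *
                  (if nth 0 s_lift i != 0 then nth 0 s_lift i else q%:R)) m.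

Definition U_seq : seq 'Z_r := s_lift ++ map -%R s_lift ++ t_seq ++ map -%R t_seq.

Lemma size_t_seq : size t_seq = m.
Proof. exact: size_mkseq. Qed.

Lemma size_U : size U_seq = (4 * m)%N.
Proof. by rewrite /U_seq !size_cat !size_map size_iota; lia. Qed.

Let r_gt1 : (1 < r)%N. Proof. by lia. Qed.

Lemma weight_U : (weight U_seq %% r = 0)%N.
Proof.
rewrite -(val_Zp_nat r_gt1) /weight natr_sum.
under eq_bigr => x _ do rewrite natr_Zp.
have sum_opp (w : seq 'Z_r) : \sum_(x <- map -%R w) x = - \sum_(x <- w) x.
  by rewrite big_map sumrN.
have sum_cat (w w' : seq 'Z_r) :
    \sum_(x <- w ++ w') x = \sum_(x <- w) x + \sum_(x <- w') x.
  exact: big_cat.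
by rewrite !sum_cat !sum_opp addNKr addrN.
Qed.

Definition sdigit j : nat := nth 0 s j.
Definition tdigit j : nat := if sdigit j == 0%N then q else sdigit j.
Definition tsign j : bool := odd (j + m - 1).

(* Position x of U lies in block blk x (one of s', -s', t, -t) at index ofs x. *)
Local Notation ofs x := (x %% m)%N.
Local Notation blk x := (x %/ m %% 4)%N.

Definition signU x : bool :=
  match blk x with 0 => false | 1 => true | 2 => tsign (ofs x) | _ => ~~ tsign (ofs x) end.
Definition magU x : nat := if (blk x < 2)%N then sdigit (ofs x) else tdigit (ofs x).

Lemma sdigit_lt j : (sdigit j < q)%N.
Proof. exact: ltn_valZp. Qed.

Lemma tdigit_gt0 j : (0 < tdigit j)%N.
Proof. by rewrite /tdigit; case: eqP; lia. Qed.

Lemma tdigit_le j : (tdigit j <= q)%N.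
Proof. by rewrite /tdigit; case: eqP; have := sdigit_lt j; lia. Qed.

Lemma magU_le x : (magU x <= q)%N.
Proof. by rewrite /magU; case: ifP => _; [exact/ltnW/sdigit_lt | exact: tdigit_le]. Qed.

Lemma tsignS j : tsign j.+1 = ~~ tsign j.
Proof. by rewrite /tsign -oddS; congr odd; lia. Qed.

Lemma tsign_last : tsign m.-1 = false.
Proof. by rewrite /tsign (_ : m.-1 + m - 1 = m.-1 + m.-1)%N ?oddD ?addbb //; lia. Qed.

Lemma nth_s_lift j : (j < m)%N -> nth 0 s_lift j = (sdigit j)%:R.
Proof. by move=> ltjm; rewrite (nth_map 0). Qed.

Lemma nth_t_seq j : (j < m)%N -> nth 0 t_seq j = (-1) ^+ tsign j * (tdigit j)%:R.
Proof.
have ltjr : (sdigit j < r)%N by have := sdigit_lt j; lia.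
by move=> ltjm; rewrite nth_mkseq // nth_s_lift // -signr_odd natZp_eq0 // /tdigit; case: eqP.
Qed.

Lemma term_U x : term U_seq x = (-1) ^+ signU x * (magU x)%:R.
Proof.
have ltjm : (ofs x < m)%N by rewrite ltn_mod.
have U_flat : U_seq = flatten [:: s_lift; map -%R s_lift; t_seq; map -%R t_seq].
  by rewrite /= cats0.
rewrite /term size_U modnM_divmod U_flat nth_flatten_eqsize //; last first.
  by rewrite /= !size_map size_iota eqxx.
rewrite /signU /magU.
case: (blk x) (ltn_pmod (x %/ m) (isT : 0 < 4)%N) => [|[|[|[|b]]]] //= _.
- by rewrite nth_s_lift // mul1r.
- by rewrite (nth_map 0) ?size_map // nth_s_lift // mulN1r.
- by rewrite nth_t_seq.
- by rewrite (nth_map 0) ?size_t_seq // nth_t_seq // -mulNr -signrN.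
Qed.

Lemma termU_inj x y : term U_seq x = term U_seq y ->
  magU x = magU y /\ (magU x = 0%N \/ signU x = signU y).
Proof.
rewrite !term_U => /signed_natZp_inj; rewrite !oddb; apply.
by have := magU_le x; have := magU_le y; lia.
Qed.

Lemma ofs_addMn x k : ofs (x + k * m) = ofs x.
Proof. by rewrite addnC modnMDl. Qed.

Lemma blk_addMn x k : blk (x + k * m) = ((blk x + k) %% 4)%N.
Proof. by rewrite addnC divnMDl // addnC modnDml. Qed.

Lemma shift1_cases x : term U_seq x = term U_seq (x + 1 * m) ->
  blk x = 0%N /\ sdigit (ofs x) = 0%N \/ odd (blk x) /\ tsign (ofs x).
Proof.
move=> /termU_inj; rewrite /magU /signU blk_addMn ofs_addMn.
have := tdigit_gt0 (ofs x).
case: (blk x) (ltn_pmod (x %/ m) (isT : 0 < 4)%N) => [|[|[|[|b]]]] //= _;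
  by case: (tsign (ofs x)) => /=; lia.
Qed.

Lemma shift2_cases x : term U_seq x = term U_seq (x + 2 * m) ->
  sdigit (ofs x) != 0%N /\ ~~ tsign (ofs x).
Proof.
move=> /termU_inj; rewrite /magU /signU blk_addMn ofs_addMn.
have := tdigit_gt0 (ofs x).
case: (blk x) (ltn_pmod (x %/ m) (isT : 0 < 4)%N) => [|[|[|[|b]]]] //= _;
  by case: (tsign (ofs x)) => /=; lia.
Qed.

Lemma ofs_blk_succ x : ((ofs x).+1 < m)%N -> ofs x.+1 = (ofs x).+1 /\ blk x.+1 = blk x.
Proof.
move=> lt_ofs; have -> : x.+1 = (x %/ m * m + (ofs x).+1)%N by rewrite addnS -divn_eq.
by rewrite modnMDl modn_small // divnMDl // (divn_small lt_ofs) addn0.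
Qed.

Lemma ofs_succ_last x : (ofs x).+1 = m -> ofs x.+1 = 0%N.
Proof.
move=> last; apply/eqP; rewrite modnS; case: ifP => // /negP[].
by rewrite (divn_eq x m) -addnS last dvdn_add ?dvdn_mull.
Qed.

Hypothesis s0 : nth 0 s 0 = 0.

Lemma shift1_pair x :
  term U_seq x = term U_seq (x + 1 * m) -> term U_seq x.+1 = term U_seq (x.+1 + 1 * m) ->
  sdigit (ofs x) = 0%N /\ sdigit (ofs x.+1) = 0%N.
Proof.
move=> /shift1_cases hx /shift1_cases hx1.
have [lt_ofs | ge_ofs] := ltnP (ofs x).+1 m.
  have [ofsS blkS] := ofs_blk_succ x lt_ofs.
  by move: hx hx1; rewrite ofsS blkS tsignS; case: (tsign (ofs x)) => /=; lia.
have last : (ofs x).+1 = m by have := ltn_pmod x s_gt0; lia.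
split; last by rewrite (ofs_succ_last x last) /sdigit s0.
case: hx => [[_ //] | [_]]; rewrite (_ : ofs x = m.-1) ?tsign_last //; lia.
Qed.

Lemma shift2_pair x :
  term U_seq x = term U_seq (x + 2 * m) -> term U_seq x.+1 = term U_seq (x.+1 + 2 * m) ->
  False.
Proof.
move=> /shift2_cases[_ sg] /shift2_cases[nz1 sg1].
have [lt_ofs | ge_ofs] := ltnP (ofs x).+1 m.
  by move: sg1; rewrite (ofs_blk_succ x lt_ofs).1 tsignS sg.
have last : (ofs x).+1 = m by have := ltn_pmod x s_gt0; lia.
by move: nz1; rewrite (ofs_succ_last x last) /sdigit s0.
Qed.

Variable n : nat.
Hypotheses (n_gt1 : (1 < n)%N) (os : is_OS s n).

Lemma no_shift1_window x : window U_seq n x <> window U_seq n (x + 1 * m).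
Proof.
move=> eqw; have shift k : (k < n)%N -> term U_seq (x + k) = term U_seq (x + k + 1 * m).
  by move=> ltkn; rewrite (term_window_eq ltkn eqw) addnAC.
apply: (os.2 x x); suff -> : window s n x = nseq n 0 by rewrite rev_nseq.
apply: (@eq_from_nth _ 0); rewrite size_mkseq ?size_nseq // => k ltkn.
rewrite nth_mkseq // nth_nseq ltkn; apply: val_inj.
change (sdigit (ofs (x + k)) = 0%N).
have [ltk1n | gek1n] := ltnP k.+1 n.
  by have := shift k.+1 ltk1n; rewrite addnS => /(shift1_pair _ (shift k ltkn)) [].
have [k' def_k] : exists k', k = k'.+1 by exists k.-1; lia.
have := shift k ltkn; rewrite def_k addnS in ltkn *.
by move/(shift1_pair _ (shift k' (ltnW ltkn))) => [].
Qed.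

Lemma no_shift2_window x : window U_seq n x <> window U_seq n (x + 2 * m).
Proof.
move=> eqw; apply: (shift2_pair x).
  by have := term_window_eq (ltnW n_gt1) eqw; rewrite !addn0.
by have := term_window_eq n_gt1 eqw; rewrite !addn1 addSn.
Qed.

Lemma no_shift_window x K : (0 < K < 4)%N -> window U_seq n x <> window U_seq n (x + K * m).
Proof.
case: K => [|[|[|[|K]]]] //= _; [exact: no_shift1_window | exact: no_shift2_window |].
move=> eqw; apply: (no_shift1_window (x + 3 * m)).
by rewrite -eqw -addnA -mulnDl -[((3 + 1) * m)%N]mul1n -size_U window_addMn.
Qed.

Lemma fold_termU x : fold_Zp q (term U_seq x) = term s x.
Proof.
rewrite term_U fold_Zp_signed; last by have := magU_le x; lia.
have tdigit_eq j : ((tdigit j)%:R : 'Z_q) = (sdigit j)%:R.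
  rewrite /tdigit; case: eqP => // ->.
  by apply: val_inj; rewrite /= val_Zp_nat // modnn.
by rewrite /magU; case: ifP => _; rewrite ?tdigit_eq; apply: natr_Zp.
Qed.

Lemma map_fold_window x : map (fold_Zp q) (window U_seq n x) = window s n x.
Proof. by rewrite -map_comp; apply: eq_map => k /=; rewrite fold_termU. Qed.

Lemma is_window_seq_U : is_window_seq U_seq n.
Proof.
move=> i j; rewrite size_U.
wlog le_ij : i j / (i <= j)%N.
  move=> W eqw; have [le_ij | /ltnW le_ji] := leqP i j; first exact: W.
  by apply/esym/W.
move=> eqw; have /eqP : i = j %[mod m] by apply: os.1; rewrite -!map_fold_window eqw.
rewrite eq_sym eqn_mod_dvd // => /dvdnP[L def_L].
have def_j : j = (i + L %% 4 * m + L %/ 4 * (4 * m))%N.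
  by rewrite mulnA -addnA -mulnDl [(L %% 4 + _)%N]addnC -divn_eq -def_L subnKC.
rewrite def_j in eqw *; rewrite -size_U window_addMn in eqw.
rewrite [in RHS]addnC modnMDl.
have [-> | K_gt0] := posnP (L %% 4); first by rewrite mul0n addn0.
by case: (no_shift_window i (L %% 4)); rewrite ?K_gt0 ?ltn_pmod.
Qed.

Lemma is_SOS_U : is_SOS U_seq n.
Proof.
have fold_eq i w : window U_seq n i = w -> window s n i = map (fold_Zp q) w.
  by move=> <-; rewrite map_fold_window.
split; [split; first exact: is_window_seq_U|].
- by move=> i j /fold_eq; rewrite map_rev map_fold_window; apply: os.2.
- by move=> i j /fold_eq; rewrite map_fold_ZpN // map_rev map_fold_window; apply: os.2.
Qed.

End FoldedConstruction.

Theorem corollary3p18 (q r n : nat) (s : seq 'Z_q) :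
  (2 * q + 1 <= r)%N -> (1 < q)%N -> (1 < n)%N ->
  (0 < size s)%N -> is_OS s n -> nth 0 s 0 = 0 ->
  let m := size s in
  let s' : seq 'Z_r := [seq (nat_of_ord x)%:R | x <- s] in
  let t : seq 'Z_r :=
    mkseq (fun i => (-1) ^+ (i + m - 1) *
                    (if nth 0 s' i != 0 then nth 0 s' i else q%:R)) m in
  let U : seq 'Z_r := s' ++ map -%R s' ++ t ++ map -%R t in
  [/\ is_SOS U n, size U = (4 * m)%N & (weight U %% r = 0)%N].
Proof.
move=> le_2q1_r q_gt1 n_gt1 s_gt0 os s0 m s' t U.
have lt2qr : (2 * q < r)%N by rewrite -addn1.
change U with (U_seq q r s); split.
- exact: is_SOS_U.
- exact: size_U.
- exact: weight_U.
Qed.
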